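(* Fix a finite set of docking points $Q=\{q_1,\dots,q_J\}\subset\partial D$ together with a cyclic order of visitation. If some gap angle of $Q$ is greater than $\pi$, then there is a $\mathbf W_d$-minimizing embedded monotone cycle in $D$ (rel $Q$) having winding number zero about the puncture. Conversely, if no gap angle is greater than $\pi$, then there is a $\mathbf W_d$-minimizing embedded cycle in $D$ (rel $Q$) of winding number $\pm 1$.
   Context: The Y-graph $\Upsilon$ has central vertex $v_0$, outer vertices $v_1,v_2,v_3$ and edges $e_i$ from $v_0$ to $v_i$ identified with $[0,1]$ ($0$ at $v_0$); write $x=|x|e_{\iota(x)}$ with edge index $\iota(x)$ (undefined at $v_0$ and then counted as different from every index). $\mathcal C=\{(x,y)\in\Upsilon\times\Upsilon:x\ne y\}$ and $D=\{(x,y)\in\mathcal C:\iota(x)\ne\iota(y)\}$. $D$ is the union of six punctured squares $\{(x,y):\iota(x)=i,\iota(y)=j\}\cong[0,1]^2\setminus\{(0,0)\}$, $i\ne j$, glued cyclically along the segments where $|x|=0$ or $|y|=0$; rescaling each square's quadrant angle by $2/3$ gives a homeomorphism of $D$ with the punctured closed unit disc $\{(r,\theta):0<r\le1\}$ in which the six branch segments $\{|x|=0\}\cup\{|y|=0\}$ (where an AGV occupies $v_0$) are the radial lines at angles $\theta\in\Theta=\{n\pi/3:n\in\mathbb Z\}$, the puncture corresponds to $(v_0,v_0)$, and $\partial D=\{|x|=1\text{ or }|y|=1\}$ is the unit circle. Given $Q=\{q_1,\dots,q_J\}\subset\partial D$ indexed in the order of visitation, the gap angles are $ga_j=\theta(q_{j+1})-\theta(q_j)\in(0,2\pi)$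 (indices mod $J$), differences taken with respect to the orientation of $\partial D$, so that $\sum_j ga_j=2\pi$. A cycle rel $Q$ is a closed curve in $D$ visiting the points of $Q$ in the given cyclic order; it is monotone if it visits $Q$ in the cyclic order of $\partial D$. The cost $\mathbf W_d(\gamma)$ of a curve is its number of intersections with the branch set $\{|x|=0\}\cup\{|y|=0\}$, i.e., the number of times an AGV occupies the central vertex; $\gamma$ is $\mathbf W_d$-minimizing if its cost is minimal among such cycles rel $Q$. Winding number is taken about the puncture; for embedded cycles it is $-1$, $0$ or $1$. *)

(* concrete reals R.  We work in the disc model of D described
   in the context: D = punctured closed unit disc in R^2, branch set = the six
   radial segments at angles n*pi/3, boundary = unit circle. *)
From Stdlib Require Import Reals Lra Lia ZArith List.
Open Scope R_scope.

Definition pt := (R * R)%type.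

Definition normp (p : pt) : R := sqrt (fst p * fst p + snd p * snd p).

Definition inD (p : pt) : Prop := 0 < normp p <= 1.

Definition on_branch (p : pt) : Prop :=
  0 < normp p /\
  exists n : Z, p = (normp p * cos (IZR n * PI / 3), normp p * sin (IZR n * PI / 3)).

Definition circ (a : R) : pt := (cos a, sin a).

(* counterclockwise angle from angle a to angle b, representative in (0, 2*pi]:
   ccw_gap a b = b - a + 2*pi*k  for the unique integer k making it lie in (0,2pi]. *)
Definition ccw_gap (a b : R) : R :=
  let x := (b - a) / (2 * PI) in 2 * PI * (x + IZR (up (- x))).

(* Docking points: J points q_j = circ (alpha j), j = 0..J-1, indexed in the
   order of visitation (indices mod J). *)
Definition gap_angle (J : nat) (alpha : nat -> R) (j : nat) : R :=
  ccw_gap (alpha j) (alpha (S j mod J)%nat).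

Definition distinct_points (J : nat) (alpha : nat -> R) : Prop :=
  forall i j, (i < J)%nat -> (j < J)%nat -> i <> j -> circ (alpha i) <> circ (alpha j).

Definition cont01 (f : R -> R) : Prop :=
  forall t, 0 <= t <= 1 -> forall eps, 0 < eps -> exists delta, 0 < delta /\
    forall s, 0 <= s <= 1 -> Rabs (s - t) < delta -> Rabs (f s - f t) < eps.

Definition closed_curve_in_D (g : R -> pt) : Prop :=
  cont01 (fun t => fst (g t)) /\ cont01 (fun t => snd (g t)) /\
  (forall t, 0 <= t <= 1 -> inD (g t)) /\ g 0 = g 1.

Definition cycle_rel (J : nat) (alpha : nat -> R) (g : R -> pt) : Prop :=
  closed_curve_in_D g /\
  exists tt : nat -> R,
    (forall j, (j < J)%nat -> 0 <= tt j < 1 /\ g (tt j) = circ (alpha j)) /\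
    (forall i j, (i < j < J)%nat -> tt i < tt j).

Definition embedded (g : R -> pt) : Prop :=
  forall s t, 0 <= s < 1 -> 0 <= t < 1 -> g s = g t -> s = t.

(* the visitation order q_0,...,q_{J-1} is the (counterclockwise) cyclic
   order of the boundary circle: the open ccw arc from q_j to q_{j+1}
   contains no other point of Q *)
Definition ccw_cyclic_order (J : nat) (alpha : nat -> R) : Prop :=
  forall i j, (i < J)%nat -> (j < J)%nat -> i <> j -> i <> (S j mod J)%nat ->
    ccw_gap (alpha j) (alpha (S j mod J)%nat) < ccw_gap (alpha j) (alpha i).

(* monotone cycle rel Q: visits Q in the cyclic order of the boundary *)
Definition monotone_cycle_rel (J : nat) (alpha : nat -> R) (g : R -> pt) : Prop :=
  cycle_rel J alpha g /\ ccw_cyclic_order J alpha.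

(* cost W_d: number of parameter times t in [0,1) at which g meets the branch
   set; has_cost g n means this number is finite and equal to n *)
Definition has_cost (g : R -> pt) (n : nat) : Prop :=
  exists l : list R, NoDup l /\ length l = n /\
    forall t, In t l <-> (0 <= t < 1 /\ on_branch (g t)).

(* W_d-minimizing among cycles rel Q (cycles of infinite cost never beat it) *)
Definition Wd_minimizing (J : nat) (alpha : nat -> R) (g : R -> pt) : Prop :=
  cycle_rel J alpha g /\
  exists n, has_cost g n /\
    forall g' m, cycle_rel J alpha g' -> has_cost g' m -> (n <= m)%nat.

Definition winding_number (g : R -> pt) (w : Z) : Prop :=
  exists th : R -> R, cont01 th /\
    (forall t, 0 <= t <= 1 -> g t = (normp (g t) * cos (th t), normp (g t) * sin (th t))) /\
    th 1 - th 0 = 2 * PI * IZR w.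

(* Each branch line, through the centre at an angle [d] multiple of [PI/3], is the zero set
   of the linear form [side d]; the three lines are pairwise transverse, so the cost of a
   cycle is at least the total number of zeros of these three forms along it.  A closed curve
   through two docking points strictly on opposite sides of a line meets it twice, and one
   through a docking point on the line meets it at least once.

   If no gap exceeds [PI], every line either separates two docking points or contains two
   of them, so every cycle costs at least 6, and the boundary circle, of winding number 1,
   costs exactly 6.  If a gap exceeds [PI], the docking points lie on an arc [[lo, hi]]
   shorter than [PI]; a branch angle strictly inside the arc forces two crossings and one at
   an end forces one.  A triangle-shaped curve sweeping along the boundary from [q_0] up to
   [hi], back down to [lo] through the interior, and along the boundary again to [q_0] meets
   each of these branch rays exactly that often and has winding number 0. *)

From Stdlib Require Import Reals Lra Lia ZArith List Classical.
Open Scope R_scope.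

Lemma add_2PI_mult_of_period (f : R -> R) :
  (forall x (n : nat), f (x + 2 * INR n * PI) = f x) ->
  forall x (k : Z), f (x + 2 * PI * IZR k) = f x.
Proof.
  intros Hper x k. destruct (Z.le_gt_cases 0 k) as [Hk|Hk].
  - rewrite <- (Z2Nat.id k), <- INR_IZR_INZ by lia.
    rewrite <- (Hper x (Z.to_nat k)). f_equal. ring.
  - replace k with (- Z.of_nat (Z.to_nat (- k)))%Z by lia.
    rewrite opp_IZR, <- INR_IZR_INZ.
    rewrite <- (Hper (x + 2 * PI * - INR (Z.to_nat (- k))) (Z.to_nat (- k))).
    f_equal. ring.
Qed.

Lemma cos_add_2PI_mult (x : R) (k : Z) : cos (x + 2 * PI * IZR k) = cos x.
Proof. exact (add_2PI_mult_of_period cos cos_period x k). Qed.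

Lemma sin_add_2PI_mult (x : R) (k : Z) : sin (x + 2 * PI * IZR k) = sin x.
Proof. exact (add_2PI_mult_of_period sin sin_period x k). Qed.

Lemma circ_add_2PI_mult (x : R) (k : Z) : circ (x + 2 * PI * IZR k) = circ x.
Proof. unfold circ. now rewrite cos_add_2PI_mult, sin_add_2PI_mult. Qed.

Lemma circ_eq_mod_2PI (a b : R) : circ a = circ b -> exists k : Z, a = b + 2 * PI * IZR k.
Proof.
  unfold circ. intros E. injection E as Hc Hs.
  assert (Hsin : sin (a - b) = 0) by (rewrite sin_minus, Hc, Hs; ring).
  assert (Hcos : cos (a - b) = 1).
  { rewrite cos_minus, Hc, Hs. pose proof (sin2_cos2 b) as E. unfold Rsqr in E. lra. }
  destruct (sin_eq_0_0 _ Hsin) as [k Hk].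
  destruct (Z.Even_or_Odd k) as [[q ->]|[q ->]].
  - exists q. rewrite mult_IZR in Hk. lra.
  - exfalso. rewrite Hk, plus_IZR, mult_IZR in Hcos.
    replace ((2 * IZR q + 1) * PI) with (PI + 2 * PI * IZR q) in Hcos by ring.
    rewrite cos_add_2PI_mult, cos_PI in Hcos. lra.
Qed.

Lemma sin_nonneg_cases (y : R) : 0 <= y <= 2 * PI -> sin y >= 0 -> y <= PI \/ y = 2 * PI.
Proof.
  intros Hy Hs. destruct (Rle_dec y PI) as [|Hgt]; [now left|].
  destruct (Req_dec y (2 * PI)) as [|Hne]; [now right|].
  exfalso. assert (sin y < 0) by (apply sin_lt_0; lra). lra.
Qed.

Lemma IZR_eq_0_of_abs_lt_1 (z : Z) : -1 < IZR z < 1 -> z = 0%Z.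
Proof.
  intros [H1 H2]. apply lt_IZR in H2.
  apply (lt_IZR (-1)) in H1. lia.
Qed.

Lemma mult_2PI_eq_0 (k : Z) (x : R) : x = 2 * PI * IZR k -> -2 * PI < x < 2 * PI -> k = 0%Z.
Proof.
  intros -> Hx. pose proof PI_RGT_0. apply IZR_eq_0_of_abs_lt_1.
  split; apply Rmult_lt_reg_l with (2 * PI); lra.
Qed.

Lemma normp_polar (r a : R) : 0 <= r -> normp (r * cos a, r * sin a) = r.
Proof.
  intros Hr. unfold normp; simpl.
  pose proof (sin2_cos2 a) as E. unfold Rsqr in E.
  replace (r * cos a * (r * cos a) + r * sin a * (r * sin a)) with (r * r)
    by (transitivity (r * r * (sin a * sin a + cos a * cos a)); [rewrite E|]; ring).
  now apply sqrt_square.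
Qed.

Lemma polar_eq_inv (r s a b : R) : 0 < r -> 0 < s ->
  (r * cos a, r * sin a) = (s * cos b, s * sin b) ->
  r = s /\ exists k : Z, a = b + 2 * PI * IZR k.
Proof.
  intros Hr Hs E.
  assert (Ers : r = s).
  { assert (N : normp (r * cos a, r * sin a) = normp (s * cos b, s * sin b)) by now rewrite E.
    now rewrite !normp_polar in N by lra. }
  subst s. split; [reflexivity|]. injection E as Hc Hsn.
  apply circ_eq_mod_2PI. unfold circ. f_equal; eapply Rmult_eq_reg_l; eauto; lra.
Qed.

Definition branch_angle (a : R) : Prop := exists n : Z, a = IZR n * PI / 3.

Lemma on_branch_polar (r a : R) : 0 < r -> on_branch (r * cos a, r * sin a) <-> branch_angle a.
Proof.
  intros Hr. unfold on_branch. rewrite normp_polar by lra. split.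
  - intros [_ [n Hn]]. destruct (polar_eq_inv _ _ _ _ Hr Hr Hn) as [_ [k Hk]].
    exists (n + 6 * k)%Z. rewrite Hk, plus_IZR, mult_IZR. field.
  - intros [n Hn]. split; [exact Hr|]. exists n. now rewrite Hn.
Qed.

Lemma floor_exists (x : R) : exists n : Z, IZR n <= x < IZR n + 1.
Proof.
  destruct (archimed x) as [H1 H2]. exists (up x - 1)%Z.
  rewrite minus_IZR. simpl (IZR 1). lra.
Qed.

Lemma integers_between (x y : R) :
  exists zs : list Z, NoDup zs /\ forall z, In z zs <-> x <= IZR z <= y.
Proof.
  destruct (floor_exists x) as [n0 Hn0]. destruct (floor_exists y) as [n1 Hn1].
  exists (filter (fun z => if Rle_dec x (IZR z) then true else false)
           (map (fun i => n0 + Z.of_nat i)%Z (seq 0 (Z.to_nat (n1 - n0 + 1))))).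
  split.
  - apply NoDup_filter, NoDup_map_NoDup_ForallPairs; [|apply seq_NoDup].
    intros i j _ _ E. lia.
  - intros z. rewrite filter_In, in_map_iff.
    destruct (Rle_dec x (IZR z)) as [Hx|Hx]; split.
    + intros [[i [<- Hi]] _]. apply in_seq in Hi. split; [exact Hx|].
      assert (IZR (n0 + Z.of_nat i) <= IZR n1) by (apply IZR_le; lia). lra.
    + intros [_ Hy]. split; [|reflexivity]. exists (Z.to_nat (z - n0)).
      assert (Hlo : IZR n0 < IZR (z + 1)) by (rewrite plus_IZR; lra).
      assert (Hhi : IZR z < IZR (n1 + 1)) by (rewrite plus_IZR; lra).
      apply lt_IZR in Hlo. apply lt_IZR in Hhi.
      split; [lia|]. apply in_seq. lia.
    + intros [_ E]. discriminate.
    + intros [Hx' _]. contradiction.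
Qed.

Lemma integers_in_window (x : R) (n : nat) :
  exists zs : list Z, NoDup zs /\ length zs = n /\
    forall z, In z zs <-> x <= IZR z < x + INR n.
Proof.
  destruct (floor_exists (- x)) as [c Hc].
  exists (map (fun i => - c + Z.of_nat i)%Z (seq 0 n)). split; [|split].
  - apply NoDup_map_NoDup_ForallPairs; [|apply seq_NoDup]. intros i j _ _ E. lia.
  - now rewrite length_map, length_seq.
  - intros z. rewrite in_map_iff. split.
    + intros [i [<- Hi]]. apply in_seq in Hi.
      rewrite plus_IZR, opp_IZR, <- INR_IZR_INZ.
      assert (INR i + 1 <= INR n) by (rewrite <- S_INR; apply le_INR; lia).
      pose proof (pos_INR i). lra.
    + intros [H1 H2]. exists (Z.to_nat (z + c)).
      assert (Hlo : IZR (- c - 1) < IZR z) by (rewrite minus_IZR, opp_IZR; simpl; lra).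
      assert (Hhi : IZR (z + c) < IZR (Z.of_nat n)) by (rewrite plus_IZR, <- INR_IZR_INZ; lra).
      apply lt_IZR in Hlo. apply lt_IZR in Hhi.
      split; [lia|]. apply in_seq. lia.
Qed.

Lemma integer_free_right (x : R) :
  exists e, 0 < e < 1 /\ forall z : Z, x <= IZR z <= x + e -> IZR z = x.
Proof.
  destruct (floor_exists x) as [n Hn]. exists ((IZR n + 1 - x) / 2). split; [lra|].
  intros z Hz. destruct (Req_dec (IZR z) x) as [|Hne]; [assumption|exfalso].
  assert (Hnz : IZR n < IZR z) by lra. apply lt_IZR in Hnz.
  assert (Hle : IZR (n + 1) <= IZR z) by (apply IZR_le; lia). rewrite plus_IZR in Hle. lra.
Qed.

Lemma PI3_le (u v : R) : u * PI / 3 <= v * PI / 3 <-> u <= v.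
Proof. pose proof PI_RGT_0. split; intros; nra. Qed.

Lemma PI3_scaled (x : R) : x = 3 * x / PI * PI / 3.
Proof. pose proof PI_RGT_0. field. lra. Qed.

Lemma PI3_le_l (u x : R) : x <= u * PI / 3 <-> 3 * x / PI <= u.
Proof. rewrite (PI3_scaled x) at 1. apply PI3_le. Qed.

Lemma PI3_le_r (u x : R) : u * PI / 3 <= x <-> u <= 3 * x / PI.
Proof. rewrite (PI3_scaled x) at 1. apply PI3_le. Qed.

Lemma PI3_lt_r (u x : R) : u * PI / 3 < x <-> u < 3 * x / PI.
Proof.
  rewrite (PI3_scaled x) at 1. pose proof PI_RGT_0.
  set (y := 3 * x / PI). split; intros; nra.
Qed.

Lemma branch_angles_of_integers (zs : list Z) (P : R -> Prop) :
  NoDup zs -> (forall z, In z zs <-> P (IZR z * PI / 3)) ->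
  exists ds, NoDup ds /\ length ds = length zs /\
    forall d, In d ds <-> branch_angle d /\ P d.
Proof.
  intros Hnd Hzs. pose proof PI_RGT_0.
  exists (map (fun z => IZR z * PI / 3) zs). split; [|split].
  - apply NoDup_map_NoDup_ForallPairs; [|exact Hnd].
    intros z z' _ _ E. apply eq_IZR. nra.
  - apply length_map.
  - intros d. rewrite in_map_iff. split.
    + intros [z [<- Hz]]. split; [now exists z|]. now apply Hzs.
    + intros [[z ->] Hd]. exists z. split; [reflexivity|]. now apply Hzs.
Qed.

Lemma branch_angles_between (a b : R) :
  exists ds, NoDup ds /\ forall d, In d ds <-> branch_angle d /\ a <= d <= b.
Proof.
  destruct (integers_between (3 * a / PI) (3 * b / PI)) as [zs [Hnd Hzs]].
  destruct (branch_angles_of_integers zs (fun d => a <= d <= b) Hnd) as [ds [Hds [_ Hin]]].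
  - intros z. now rewrite Hzs, PI3_le_l, PI3_le_r.
  - now exists ds.
Qed.

Lemma branch_angles_in_turn (b : R) :
  exists ds, NoDup ds /\ length ds = 6%nat /\
    forall d, In d ds <-> branch_angle d /\ b <= d < b + 2 * PI.
Proof.
  destruct (integers_in_window (3 * b / PI) 6) as [zs [Hnd [Hlen Hzs]]].
  destruct (branch_angles_of_integers zs (fun d => b <= d < b + 2 * PI) Hnd)
    as [ds [Hds [Hl Hin]]].
  - intros z. rewrite Hzs, PI3_le_l, PI3_lt_r.
    replace (3 * (b + 2 * PI) / PI) with (3 * b / PI + INR 6)
      by (simpl; field; pose proof PI_RGT_0; lra).
    reflexivity.
  - exists ds. now rewrite Hl, Hlen.
Qed.

Lemma branch_angle_free_right (m : R) :
  exists e, 0 < e < PI / 3 /\ forall d, branch_angle d -> m <= d <= m + e -> d = m.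
Proof.
  pose proof PI_RGT_0. destruct (integer_free_right (3 * m / PI)) as [e [He Hfree]].
  exists (e * PI / 3). split; [nra|].
  intros d [z ->] Hd.
  assert (Hz : IZR z = 3 * m / PI).
  { destruct Hd as [Hd1 Hd2]. apply PI3_le_l in Hd1. apply PI3_le_r in Hd2.
    replace (3 * (m + e * PI / 3) / PI) with (3 * m / PI + e) in Hd2 by (field; lra).
    now apply Hfree. }
  rewrite Hz. symmetry. apply PI3_scaled.
Qed.

Lemma ccw_gap_range (a b : R) : 0 < ccw_gap a b <= 2 * PI.
Proof.
  unfold ccw_gap. set (x := (b - a) / (2 * PI)).
  destruct (archimed (- x)) as [H1 H2]. pose proof PI_RGT_0.
  split; [apply Rmult_lt_0_compat|]; [lra|lra|].
  rewrite <- (Rmult_1_r (2 * PI)) at 2. apply Rmult_le_compat_l; lra.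
Qed.

Lemma ccw_gap_mod_2PI (a b : R) : exists k : Z, ccw_gap a b = b - a + 2 * PI * IZR k.
Proof.
  unfold ccw_gap. exists (up (- ((b - a) / (2 * PI)))).
  pose proof PI_RGT_0. field. lra.
Qed.

Lemma ccw_gap_unique (a b x : R) (k : Z) :
  0 < x <= 2 * PI -> x = b - a + 2 * PI * IZR k -> ccw_gap a b = x.
Proof.
  intros Hx Hk. destruct (ccw_gap_mod_2PI a b) as [k' Hk'].
  pose proof (ccw_gap_range a b).
  assert (k' - k = 0)%Z as E.
  { apply (mult_2PI_eq_0 _ (ccw_gap a b - x)); [rewrite minus_IZR|]; lra. }
  replace k' with k in Hk' by lia. lra.
Qed.

Fixpoint lifted_angle (J : nat) (alpha : nat -> R) (j : nat) : R :=
  match j with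
  | O => alpha O
  | S j' => lifted_angle J alpha j' + gap_angle J alpha j'
  end.

Section LiftedAngles.

Variables (J : nat) (alpha : nat -> R).
Local Notation theta := (lifted_angle J alpha).

Lemma gap_angle_range (j : nat) : 0 < gap_angle J alpha j <= 2 * PI.
Proof. apply ccw_gap_range. Qed.

Lemma lifted_angle_lt (i j : nat) : (i < j)%nat -> theta i < theta j.
Proof.
  induction 1 as [|j _ IH]; simpl;
    [|pose proof (gap_angle_range j)]; pose proof (gap_angle_range i); lra.
Qed.

Lemma lifted_angle_le (i j : nat) : (i <= j)%nat -> theta i <= theta j.
Proof.
  intros Hij. destruct (Nat.eq_dec i j) as [->|Hne]; [lra|].
  left. apply lifted_angle_lt. lia.
Qed.

Lemma lifted_angle_mod_2PI (j : nat) : (j < J)%nat -> exists k : Z, theta j = alpha j + 2 * PI * IZR k.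
Proof.
  induction j as [|j IH]; intros Hj; [exists 0%Z; simpl; ring|].
  destruct IH as [k Hk]; [lia|]. simpl. unfold gap_angle.
  rewrite Nat.mod_small by lia.
  destruct (ccw_gap_mod_2PI (alpha j) (alpha (S j))) as [k' ->].
  exists (k + k')%Z. rewrite Hk, plus_IZR. ring.
Qed.

Lemma circ_lifted_angle (j : nat) : (j < J)%nat -> circ (theta j) = circ (alpha j).
Proof.
  intros Hj. destruct (lifted_angle_mod_2PI j Hj) as [k ->]. apply circ_add_2PI_mult.
Qed.

Lemma gap_angle_lt_2PI (j : nat) : (2 <= J)%nat -> distinct_points J alpha -> (j < J)%nat ->
  gap_angle J alpha j < 2 * PI.
Proof.
  intros HJ2 Hdist Hj. destruct (gap_angle_range j) as [_ [Hlt|Heq]]; [exact Hlt|].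
  exfalso. unfold gap_angle in Heq.
  destruct (ccw_gap_mod_2PI (alpha j) (alpha (S j mod J))) as [k Hk].
  apply (Hdist (S j mod J)%nat j); [apply Nat.mod_upper_bound; lia|exact Hj| |].
  - destruct (Nat.eq_dec (S j) J) as [E|E].
    + rewrite E, Nat.Div0.mod_same. lia.
    + rewrite Nat.mod_small; lia.
  - replace (alpha (S j mod J)%nat) with (alpha j + 2 * PI * IZR (1 - k))
      by (rewrite minus_IZR; simpl; lra).
    apply circ_add_2PI_mult.
Qed.

Hypothesis HJ : (1 <= J)%nat.
Hypothesis Hsum : sum_f_R0 (gap_angle J alpha) (J - 1) = 2 * PI.

Lemma lifted_angle_last : theta J = alpha O + 2 * PI.
Proof.
  assert (Hpartial : forall n, theta (S n) = alpha O + sum_f_R0 (gap_angle J alpha) n).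
  { induction n as [|n IH]; [simpl; ring|]. change (theta (S (S n))) with
      (theta (S n) + gap_angle J alpha (S n)). rewrite IH. simpl. ring. }
  replace J with (S (J - 1)) at 2 by lia. now rewrite Hpartial, Hsum.
Qed.

Lemma circ_lifted_angle_succ (j : nat) : (j < J)%nat ->
  circ (theta (S j)) = circ (alpha (S j mod J)).
Proof.
  intros Hj. destruct (Nat.eq_dec (S j) J) as [E|E].
  - rewrite E, Nat.Div0.mod_same, lifted_angle_last.
    replace (alpha O + 2 * PI) with (alpha O + 2 * PI * IZR 1) by (simpl; ring).
    apply circ_add_2PI_mult.
  - rewrite Nat.mod_small by lia. apply circ_lifted_angle. lia.
Qed.

Lemma lifted_angle_window (j : nat) : (j < J)%nat -> alpha O <= theta j < alpha O + 2 * PI.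
Proof.
  intros Hj. rewrite <- lifted_angle_last.
  split; [apply (lifted_angle_le 0)|apply lifted_angle_lt]; lia.
Qed.

Lemma ccw_gap_lifted_angle (i j : nat) : (i < J)%nat -> (j < J)%nat ->
  ccw_gap (alpha j) (alpha i) =
  if Nat.ltb j i then theta i - theta j else theta i + 2 * PI - theta j.
Proof.
  intros Hi Hj.
  destruct (lifted_angle_mod_2PI i Hi) as [ki Hki].
  destruct (lifted_angle_mod_2PI j Hj) as [kj Hkj].
  pose proof (lifted_angle_window i Hi). pose proof (lifted_angle_window j Hj).
  destruct (Nat.ltb_spec j i) as [Hji|Hij].
  - apply ccw_gap_unique with (k := (ki - kj)%Z); [|rewrite minus_IZR; lra].
    pose proof (lifted_angle_lt j i Hji). lra.
  - apply ccw_gap_unique with (k := (ki - kj + 1)%Z); [|rewrite plus_IZR, minus_IZR; simpl; lra].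
    pose proof (lifted_angle_le i j Hij). lra.
Qed.

Lemma ccw_cyclic_order_of_gap_sum : ccw_cyclic_order J alpha.
Proof.
  intros i j Hi Hj Hij Hnext.
  change (ccw_gap (alpha j) (alpha (S j mod J))) with (gap_angle J alpha j).
  replace (gap_angle J alpha j) with (theta (S j) - theta j) by (simpl; ring).
  rewrite ccw_gap_lifted_angle by assumption.
  destruct (Nat.ltb_spec j i) as [Hji|Hij'].
  - rewrite Nat.mod_small in Hnext by lia.
    pose proof (lifted_angle_lt (S j) i ltac:(lia)). lra.
  - pose proof (lifted_angle_window i Hi). pose proof lifted_angle_last.
    destruct (Nat.eq_dec (S j) J) as [E|E].
    + rewrite E, Nat.Div0.mod_same in Hnext.
      pose proof (lifted_angle_lt 0 i ltac:(lia)). rewrite E. simpl in *. lra.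
    + pose proof (lifted_angle_lt (S j) J ltac:(lia)). lra.
Qed.

End LiftedAngles.

(** * Crossings with the branch lines *)

Definition clamp01 (t : R) : R := Rmax 0 (Rmin 1 t).

Lemma clamp01_id (t : R) : 0 <= t <= 1 -> clamp01 t = t.
Proof. intros Ht. unfold clamp01, Rmax, Rmin. repeat destruct Rle_dec; lra. Qed.

Lemma clamp01_range (t : R) : 0 <= clamp01 t <= 1.
Proof. unfold clamp01, Rmax, Rmin. repeat destruct Rle_dec; lra. Qed.

Lemma clamp01_lipschitz (s t : R) : Rabs (clamp01 s - clamp01 t) <= Rabs (s - t).
Proof.
  unfold clamp01, Rmax, Rmin, Rabs. repeat (destruct Rle_dec || destruct Rcase_abs); lra.
Qed.

Lemma continuity_clamp01 (f : R -> R) : cont01 f -> continuity (fun t => f (clamp01 t)).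
Proof.
  intros Hf x eps Heps.
  destruct (Hf (clamp01 x) (clamp01_range x) eps Heps) as [delta [Hdelta Hclose]].
  exists delta. split; [exact Hdelta|]. intros y [_ Hy]. simpl in *. unfold R_dist in *.
  apply Hclose; [apply clamp01_range|].
  eapply Rle_lt_trans; [apply clamp01_lipschitz|exact Hy].
Qed.

Lemma cont01_of_continuity (f : R -> R) : continuity f -> cont01 f.
Proof.
  intros Hf t _ eps Heps. destruct (Hf t eps Heps) as [delta [Hdelta Hclose]].
  exists delta. split; [exact Hdelta|]. intros s _ Hst.
  destruct (Req_dec s t) as [->|Hne]; [rewrite Rminus_diag, Rabs_R0; lra|].
  apply Hclose. split; [split; [exact I|auto]|exact Hst].
Qed.

Lemma IVT_open (F : R -> R) (a b : R) : continuity F -> a < b -> F a * F b < 0 ->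
  exists z, a < z < b /\ F z = 0.
Proof.
  intros HF Hab Hs. destruct (IVT_cor F a b HF ltac:(lra) ltac:(lra)) as [z [Hz Fz]].
  exists z. split; [|exact Fz].
  split; apply Rnot_le_lt; intros Hle;
    [replace z with a in Fz by lra|replace z with b in Fz by lra]; rewrite Fz in Hs; lra.
Qed.

Lemma two_zeros_of_sign_change (F : R -> R) (a b : R) : continuity F -> F 0 = F 1 ->
  0 <= a < b -> b < 1 -> F a * F b < 0 ->
  exists z1 z2, 0 <= z1 < 1 /\ 0 <= z2 < 1 /\ z1 <> z2 /\ F z1 = 0 /\ F z2 = 0.
Proof.
  intros HF Hper Ha Hb Hab.
  destruct (IVT_open F a b HF ltac:(lra) Hab) as [z1 [Hz1 F1]].
  assert (Hz2 : exists z2, (0 <= z2 < a \/ b < z2 < 1) /\ F z2 = 0).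
  { destruct (Rtotal_order (F 0 * F a) 0) as [Hneg|[Hzero|Hpos]].
    - destruct (Req_dec a 0) as [->|Ha0]; [nra|].
      destruct (IVT_open F 0 a HF ltac:(lra) Hneg) as [z [Hz Fz]].
      exists z. split; [left; lra|exact Fz].
    - assert (Fa : F a <> 0) by (intros E; rewrite E in Hab; lra).
      destruct (Rmult_integral _ _ Hzero) as [F0|]; [|contradiction].
      exists 0. split; [left|exact F0].
      destruct (Req_dec a 0) as [->|]; [contradiction|lra].
    - assert (Hneg : F b * F 1 < 0) by (rewrite <- Hper; nra).
      destruct (IVT_open F b 1 HF ltac:(lra) Hneg) as [z [Hz Fz]].
      exists z. split; [right; lra|exact Fz]. }
  destruct Hz2 as [z2 [Hz2 F2]]. exists z1, z2. repeat split; auto; lra.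
Qed.

Definition side (d : R) (p : pt) : R := cos d * snd p - sin d * fst p.

Lemma side_circ (d a : R) : side d (circ a) = sin (a - d).
Proof. unfold side, circ; simpl. rewrite sin_minus. ring. Qed.

Lemma side_zero_collinear (d : R) (p : pt) : side d p = 0 ->
  p = ((cos d * fst p + sin d * snd p) * cos d, (cos d * fst p + sin d * snd p) * sin d).
Proof.
  destruct p as [x y]. unfold side; simpl. intros H.
  pose proof (sin2_cos2 d) as E. unfold Rsqr in E. f_equal.
  - replace ((cos d * x + sin d * y) * cos d)
      with (x * (sin d * sin d + cos d * cos d) + sin d * (cos d * y - sin d * x)) by ring.
    rewrite E, H. ring.
  - replace ((cos d * x + sin d * y) * sin d)
      with (y * (sin d * sin d + cos d * cos d) - cos d * (cos d * y - sin d * x)) by ring.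
    rewrite E, H. ring.
Qed.

Lemma side_zero_on_branch (d : R) (p : pt) :
  branch_angle d -> inD p -> side d p = 0 -> on_branch p.
Proof.
  intros [n Hn] [Hpos _] H0. rewrite (side_zero_collinear d p H0) in Hpos |- *.
  set (l := cos d * fst p + sin d * snd p) in *.
  destruct (Rtotal_order l 0) as [Hl|[Hl|Hl]].
  - replace (l * cos d, l * sin d) with (- l * cos (d + PI), - l * sin (d + PI))
      by (rewrite neg_cos, neg_sin; f_equal; ring).
    apply on_branch_polar; [lra|]. exists (n + 3)%Z. rewrite plus_IZR, Hn. simpl. field.
  - rewrite Hl, normp_polar in Hpos; lra.
  - apply on_branch_polar; [lra|]. now exists n.
Qed.

Lemma side_zero_unique (d e : R) (p : pt) :
  inD p -> side d p = 0 -> side e p = 0 -> sin (d - e) = 0.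
Proof.
  intros [Hpos _] Hd He. rewrite (side_zero_collinear d p Hd) in Hpos, He.
  set (l := cos d * fst p + sin d * snd p) in *.
  assert (Hl : l <> 0) by (intros E; rewrite E, normp_polar in Hpos; lra).
  unfold side in He; simpl in He. rewrite sin_minus.
  apply (Rmult_eq_reg_l l); [lra|exact Hl].
Qed.

Definition has_crossings (g : R -> pt) (d : R) (c : nat) : Prop :=
  exists l : list R, NoDup l /\ length l = c /\
    forall t, In t l -> 0 <= t < 1 /\ side d (g t) = 0.

Lemma has_crossings_1 (g : R -> pt) (d a : R) :
  0 <= a < 1 -> side d (g a) = 0 -> has_crossings g d 1.
Proof.
  intros Ha Hd. exists (a :: nil). split; [repeat constructor; auto|].
  split; [reflexivity|]. intros t [<-|[]]. auto.
Qed.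

Lemma has_crossings_2 (g : R -> pt) (d a b : R) : 0 <= a < 1 -> 0 <= b < 1 -> a <> b ->
  side d (g a) = 0 -> side d (g b) = 0 -> has_crossings g d 2.
Proof.
  intros Ha Hb Hab Hda Hdb. exists (a :: b :: nil). split.
  - constructor; [intros [E|[]]; auto|]. repeat constructor; auto.
  - split; [reflexivity|]. intros t [<-|[<-|[]]]; auto.
Qed.

Lemma has_crossings_2_of_sign_change (g : R -> pt) (d a b : R) : closed_curve_in_D g ->
  0 <= a < 1 -> 0 <= b < 1 -> side d (g a) * side d (g b) < 0 -> has_crossings g d 2.
Proof.
  intros [Hx [Hy [_ Hper]]] Ha Hb Hab.
  set (F := fun t => side d (g (clamp01 t))).
  assert (HF : continuity F).
  { unfold F, side. apply continuity_minus; apply continuity_scal;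
      apply (continuity_clamp01 (fun t => _ (g t))); assumption. }
  assert (EF : forall t, 0 <= t <= 1 -> F t = side d (g t))
    by (intros t Ht; unfold F; now rewrite clamp01_id).
  assert (Hsign : forall u v, 0 <= u < v -> v < 1 -> F u * F v < 0 -> has_crossings g d 2).
  { intros u v Huv Hv Hs.
    destruct (two_zeros_of_sign_change F u v HF ltac:(rewrite !EF, Hper by lra; reflexivity)
      Huv Hv Hs) as [z1 [z2 [Hz1 [Hz2 [Hne [F1 F2]]]]]].
    apply (has_crossings_2 g d z1 z2); auto; rewrite <- EF; auto; lra. }
  destruct (Rtotal_order a b) as [Hlt|[->|Hgt]]; [| nra |].
  - apply (Hsign a b); [lra|lra|]. rewrite !EF by lra. exact Hab.
  - apply (Hsign b a); [lra|lra|]. rewrite !EF by lra. lra.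
Qed.

Lemma crossing_times_union (g : R -> pt) (ds : list R) (cs : R -> nat) :
  closed_curve_in_D g -> NoDup ds ->
  (forall d e, In d ds -> In e ds -> d <> e -> sin (d - e) <> 0) ->
  (forall d, In d ds -> has_crossings g d (cs d)) ->
  exists L, NoDup L /\ length L = list_sum (map cs ds) /\
    forall t, In t L -> 0 <= t < 1 /\ exists d, In d ds /\ side d (g t) = 0.
Proof.
  intros [_ [_ [HD _]]]. induction ds as [|d ds IH]; intros Hnd Hindep Hcross.
  - exists nil. split; [constructor|split; [reflexivity|intros t []]].
  - inversion Hnd as [|? ? Hd Hnd']; subst.
    destruct IH as [L [HL [HLlen HLin]]]; auto using in_cons.
    destruct (Hcross d (in_eq d ds)) as [l [Hl [Hllen Hlin]]].
    exists (l ++ L). split; [|split].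
    + apply NoDup_app; auto. intros t Htl HtL.
      destruct (Hlin t Htl) as [Ht Hside]. destruct (HLin t HtL) as [_ [e [He Hside']]].
      apply (Hindep d e); [apply in_eq|now apply in_cons|congruence|].
      apply (side_zero_unique d e (g t)); auto. apply HD. lra.
    + simpl. now rewrite length_app, Hllen, HLlen.
    + intros t Ht. apply in_app_or in Ht as [Ht|Ht].
      * destruct (Hlin t Ht). split; auto. exists d. auto using in_eq.
      * destruct (HLin t Ht) as [Ht01 [e [He Hside]]]. split; auto. exists e. auto using in_cons.
Qed.

Lemma cost_ge_crossings (g : R -> pt) (n : nat) (ds : list R) (cs : R -> nat) :
  closed_curve_in_D g -> has_cost g n -> NoDup ds ->
  (forall d, In d ds -> branch_angle d) ->
  (forall d e, In d ds -> In e ds -> d <> e -> sin (d - e) <> 0) ->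
  (forall d, In d ds -> has_crossings g d (cs d)) ->
  (list_sum (map cs ds) <= n)%nat.
Proof.
  intros Hg [l [_ [<- Hl]]] Hnd Hbranch Hindep Hcross.
  destruct (crossing_times_union g ds cs Hg Hnd Hindep Hcross) as [L [HL [<- HLin]]].
  apply NoDup_incl_length; [exact HL|]. intros t Ht. apply Hl.
  destruct (HLin t Ht) as [Ht01 [d [Hd Hside]]]. split; [exact Ht01|].
  destruct Hg as [_ [_ [HD _]]]. apply (side_zero_on_branch d); auto. apply HD. lra.
Qed.

Definition polar (rho psi : R -> R) : R -> pt :=
  fun t => (rho t * cos (psi t), rho t * sin (psi t)).

Lemma polar_closed_curve (rho psi : R -> R) : continuity rho -> continuity psi ->
  (forall t, 0 <= t <= 1 -> 0 < rho t <= 1) -> polar rho psi 0 = polar rho psi 1 ->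
  closed_curve_in_D (polar rho psi).
Proof.
  intros Hrho Hpsi Hr Hper. unfold polar. split; [|split; [|split]].
  - apply cont01_of_continuity. simpl. reg.
  - apply cont01_of_continuity. simpl. reg.
  - intros t Ht. specialize (Hr t Ht). unfold inD. rewrite normp_polar; lra.
  - exact Hper.
Qed.

Lemma polar_winding_number (rho psi : R -> R) (w : Z) : continuity psi ->
  (forall t, 0 <= t <= 1 -> 0 < rho t) -> psi 1 - psi 0 = 2 * PI * IZR w ->
  winding_number (polar rho psi) w.
Proof.
  intros Hpsi Hr Hw. exists psi. split; [now apply cont01_of_continuity|]. split; [|exact Hw].
  intros t Ht. unfold polar. specialize (Hr t Ht). now rewrite normp_polar by lra.
Qed.

Lemma polar_embedded (rho psi : R -> R) :
  (forall t, 0 <= t < 1 -> 0 < rho t) ->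
  (forall s t, 0 <= s < 1 -> 0 <= t < 1 -> rho s = rho t -> psi s = psi t -> s = t) ->
  (forall s t, 0 <= s < 1 -> 0 <= t < 1 -> Rabs (psi s - psi t) < 2 * PI) ->
  embedded (polar rho psi).
Proof.
  intros Hr Hinj Hspread s t Hs Ht E.
  destruct (polar_eq_inv _ _ _ _ (Hr s Hs) (Hr t Ht) E) as [Erho [k Hk]].
  apply Hinj; auto.
  assert (k = 0%Z) as ->.
  { apply (mult_2PI_eq_0 k (psi s - psi t)); [lra|].
    specialize (Hspread s t Hs Ht). apply Rabs_def2 in Hspread. lra. }
  rewrite Hk. simpl. ring.
Qed.

Lemma polar_has_cost (rho psi : R -> R) (l : list R) :
  (forall t, 0 <= t < 1 -> 0 < rho t) -> NoDup l ->
  (forall t, In t l <-> 0 <= t < 1 /\ branch_angle (psi t)) ->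
  has_cost (polar rho psi) (length l).
Proof.
  intros Hr Hnd Hl. exists l. split; [exact Hnd|]. split; [reflexivity|].
  intros t. rewrite Hl. unfold polar. split; intros [Ht Hb]; split; auto;
    [apply on_branch_polar|apply (on_branch_polar (rho t))]; auto.
Qed.

Definition circle_from (b : R) : R -> pt := polar (fun _ => 1) (fun t => b + 2 * PI * t).

Lemma circle_from_closed (b : R) : closed_curve_in_D (circle_from b).
Proof.
  apply polar_closed_curve; [reg|reg|intros; lra|].
  unfold polar. now rewrite (cos_add_2PI_mult b 1), (sin_add_2PI_mult b 1), Rmult_0_r, Rplus_0_r.
Qed.

Lemma circle_from_winding_number (b : R) : winding_number (circle_from b) 1.
Proof. apply polar_winding_number; [reg|intros; lra|simpl; ring]. Qed.

Lemma circle_from_embedded (b : R) : embedded (circle_from b).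
Proof.
  pose proof PI_RGT_0. apply polar_embedded; [intros; lra| |].
  - intros s t _ _ _ E. nra.
  - intros s t Hs Ht. replace (b + 2 * PI * s - (b + 2 * PI * t)) with (2 * PI * (s - t)) by ring.
    rewrite Rabs_mult, (Rabs_right (2 * PI)) by lra.
    assert (Rabs (s - t) < 1) by (apply Rabs_def1; lra). nra.
Qed.

Lemma circle_from_at (b x : R) : b <= x < b + 2 * PI ->
  0 <= (x - b) / (2 * PI) < 1 /\ circle_from b ((x - b) / (2 * PI)) = circ x.
Proof.
  intros Hx. pose proof PI_RGT_0. split.
  - split; [apply Rmult_le_pos; [lra|left; apply Rinv_0_lt_compat; lra]|].
    apply Rmult_lt_reg_r with (2 * PI); [lra|]. field_simplify; lra.
  - unfold circle_from, polar, circ. rewrite !Rmult_1_l.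
    now replace (b + 2 * PI * ((x - b) / (2 * PI))) with x by (field; lra).
Qed.

Lemma circle_from_has_cost (b : R) : has_cost (circle_from b) 6.
Proof.
  pose proof PI_RGT_0.
  destruct (branch_angles_in_turn b) as [ds [Hnd [Hlen Hds]]].
  rewrite <- Hlen, <- (length_map (fun d => (d - b) / (2 * PI))).
  apply polar_has_cost; [intros; lra| |].
  - apply NoDup_map_NoDup_ForallPairs; [|exact Hnd].
    intros d e _ _ E. apply Rmult_eq_reg_r in E; [lra|]. apply Rinv_neq_0_compat. lra.
  - intros t. rewrite in_map_iff. split.
    + intros [d [<- Hd]]. apply Hds in Hd as [Hbr Hd].
      split; [apply (circle_from_at b d Hd)|].
      now replace (b + 2 * PI * ((d - b) / (2 * PI))) with d by (field; lra).
    + intros [Ht Hbr]. exists (b + 2 * PI * t). split; [field; lra|].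
      apply Hds. split; [exact Hbr|nra].
Qed.

Lemma circle_from_cycle_rel (J : nat) (alpha : nat -> R) : (1 <= J)%nat ->
  sum_f_R0 (gap_angle J alpha) (J - 1) = 2 * PI ->
  cycle_rel J alpha (circle_from (alpha O)).
Proof.
  intros HJ Hsum. pose proof PI_RGT_0. split; [apply circle_from_closed|].
  exists (fun j => (lifted_angle J alpha j - alpha O) / (2 * PI)). split.
  - intros j Hj. rewrite <- (circ_lifted_angle J alpha j Hj).
    apply circle_from_at, (lifted_angle_window J alpha HJ Hsum j Hj).
  - intros i j Hij. apply Rmult_lt_compat_r; [apply Rinv_0_lt_compat; lra|].
    pose proof (lifted_angle_lt J alpha i j ltac:(lia)). lra.
Qed.

(** * The triangle curve *)

(* Rabs-based forms of [Rmax 0 x] and [Rmin x y], so that [reg] proves continuity. *)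
Definition pos_part (x : R) : R := (x + Rabs x) / 2.
Definition min_abs (x y : R) : R := (x + y - Rabs (x - y)) / 2.

Lemma pos_part_nonpos (x : R) : x <= 0 -> pos_part x = 0.
Proof. intros. unfold pos_part, Rabs. destruct Rcase_abs; lra. Qed.

Lemma pos_part_nonneg (x : R) : 0 <= x -> pos_part x = x.
Proof. intros. unfold pos_part, Rabs. destruct Rcase_abs; lra. Qed.

Lemma min_abs_spec (x y : R) : min_abs x y = x /\ x <= y \/ min_abs x y = y /\ y <= x.
Proof. unfold min_abs, Rabs. destruct Rcase_abs; [left|right]; lra. Qed.

Lemma In_nested_if_singleton {A B : Prop} (p : {A} + {~ A}) (q : {B} + {~ B}) (x t : R) :
  In t (if p then if q then x :: nil else nil else nil) <-> A /\ B /\ t = x.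
Proof. destruct p, q; simpl; intuition. Qed.

Lemma NoDup_flat_map_fibers {A B : Type} (f : A -> list B) (h : B -> A) (l : list A) :
  NoDup l -> (forall x, NoDup (f x)) -> (forall x y, In y (f x) -> h y = x) ->
  NoDup (flat_map f l).
Proof.
  intros Hl Hf Hh. induction l as [|x l IH]; [constructor|]. inversion Hl; subst. simpl.
  apply NoDup_app; auto. intros y Hx Hrest. apply in_flat_map in Hrest as [x' [Hx' Hy]].
  rewrite <- (Hh x y Hx), (Hh x' y Hy) in *. contradiction.
Qed.

Definition arc_multiplicity (m M d : R) : nat :=
  if Rlt_dec m d then if Rlt_dec d M then 2 else 1 else 1.

Section Triangle.

Variables m b M : R.
Hypothesis Hmb : m <= b.
Hypothesis HbM : b <= M.
Hypothesis HmM : m < M.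

Definition tri_speed : R := 2 * (M - m).
Definition tri_turn : R := (M - b) / tri_speed.

(* The angle rises from [b] to [M], falls back to [m] and rises again to [b]; the radius
   dips below 1 on the falling stretch only, which keeps the curve embedded. *)
Definition tri_angle (t : R) : R :=
  b + tri_speed * t - 2 * tri_speed * pos_part (t - tri_turn)
    + 2 * tri_speed * pos_part (t - (tri_turn + /2)).
Definition tri_radius (t : R) : R := 1 - pos_part (min_abs (t - tri_turn) (tri_turn + /2 - t)).
Definition triangle : R -> pt := polar tri_radius tri_angle.

Definition rising_time (x : R) : R := (x - b) / tri_speed.
Definition falling_time (x : R) : R := tri_turn + (M - x) / tri_speed.
Definition returning_time (x : R) : R := tri_turn + /2 + (x - m) / tri_speed.

Lemma tri_speed_pos : 0 < tri_speed.
Proof. unfold tri_speed. lra. Qed.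

Lemma tri_turn_spec : tri_speed * tri_turn = M - b /\ 0 <= tri_turn <= /2.
Proof.
  pose proof tri_speed_pos. assert (E : tri_speed * tri_turn = M - b).
  { unfold tri_turn. field. lra. }
  split; [exact E|]. unfold tri_speed in *. split; nra.
Qed.

Lemma tri_angle_rising (t : R) : t <= tri_turn -> tri_angle t = b + tri_speed * t.
Proof.
  intros Ht. pose proof tri_turn_spec. unfold tri_angle.
  rewrite !pos_part_nonpos by lra. ring.
Qed.

Lemma tri_angle_falling (t : R) : tri_turn <= t <= tri_turn + /2 ->
  tri_angle t = M - tri_speed * (t - tri_turn).
Proof.
  intros Ht. pose proof tri_turn_spec. unfold tri_angle.
  rewrite pos_part_nonneg, pos_part_nonpos by lra. lra.
Qed.

Lemma tri_angle_returning (t : R) : tri_turn + /2 <= t ->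
  tri_angle t = m + tri_speed * (t - tri_turn - /2).
Proof.
  intros Ht. pose proof tri_turn_spec. unfold tri_angle.
  rewrite !pos_part_nonneg by lra. unfold tri_speed in *. lra.
Qed.

Lemma tri_radius_outside (t : R) : t <= tri_turn \/ tri_turn + /2 <= t -> tri_radius t = 1.
Proof.
  intros Ht. unfold tri_radius.
  destruct (min_abs_spec (t - tri_turn) (tri_turn + /2 - t)) as [[-> ?]|[-> ?]];
    rewrite pos_part_nonpos; lra.
Qed.

Lemma tri_radius_range (t : R) : 3 / 4 <= tri_radius t <= 1 /\
  (tri_turn < t < tri_turn + /2 -> tri_radius t < 1).
Proof.
  unfold tri_radius.
  destruct (min_abs_spec (t - tri_turn) (tri_turn + /2 - t)) as [[-> Hu]|[-> Hu]];
    match goal with |- context [pos_part ?u] =>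
      destruct (Rle_dec u 0); [rewrite pos_part_nonpos|rewrite pos_part_nonneg]; lra end.
Qed.

Lemma rising_time_spec (x : R) : b <= x <= M ->
  0 <= rising_time x <= tri_turn /\ tri_angle (rising_time x) = x /\
  tri_radius (rising_time x) = 1.
Proof.
  intros Hx. pose proof tri_speed_pos. destruct tri_turn_spec as [Eturn _].
  assert (E : tri_speed * rising_time x = x - b) by (unfold rising_time; field; lra).
  assert (Ht : 0 <= rising_time x <= tri_turn) by (split; nra).
  split; [exact Ht|]. split.
  - rewrite tri_angle_rising by lra. lra.
  - apply tri_radius_outside. lra.
Qed.

Lemma falling_time_spec (x : R) : m <= x <= M ->
  tri_turn <= falling_time x <= tri_turn + /2 /\ tri_angle (falling_time x) = x.
Proof.
  intros Hx. pose proof tri_speed_pos.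
  assert (E : tri_speed * (falling_time x - tri_turn) = M - x)
    by (unfold falling_time; field; lra).
  assert (Ht : tri_turn <= falling_time x <= tri_turn + /2) by (unfold tri_speed in *; split; nra).
  split; [exact Ht|]. rewrite tri_angle_falling by lra. lra.
Qed.

Lemma returning_time_spec (x : R) : m <= x < b ->
  tri_turn + /2 <= returning_time x < 1 /\ tri_angle (returning_time x) = x /\
  tri_radius (returning_time x) = 1.
Proof.
  intros Hx. pose proof tri_speed_pos. destruct tri_turn_spec as [Eturn _].
  assert (E : tri_speed * (returning_time x - tri_turn - /2) = x - m)
    by (unfold returning_time; field; lra).
  assert (tri_speed * (1 - tri_turn - /2) = b - m) by (unfold tri_speed in *; lra).
  assert (Ht : tri_turn + /2 <= returning_time x < 1) by (unfold tri_speed in *; split; nra).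
  split; [exact Ht|]. split.
  - rewrite tri_angle_returning by lra. lra.
  - apply tri_radius_outside. lra.
Qed.

Lemma rising_time_increasing (x y : R) : x < y -> rising_time x < rising_time y.
Proof.
  intros Hxy. pose proof tri_speed_pos. unfold rising_time.
  apply Rmult_lt_compat_r; [apply Rinv_0_lt_compat|]; lra.
Qed.

Lemma returning_time_increasing (x y : R) : x < y -> returning_time x < returning_time y.
Proof.
  intros Hxy. pose proof tri_speed_pos. unfold returning_time.
  apply Rplus_lt_compat_l, Rmult_lt_compat_r; [apply Rinv_0_lt_compat|]; lra.
Qed.

Lemma tri_pieces (t : R) : 0 <= t < 1 ->
  (t < tri_turn /\ b <= tri_angle t < M /\ t = rising_time (tri_angle t) /\
     tri_radius t = 1) \/
  (tri_turn <= t < tri_turn + /2 /\ m < tri_angle t <= M /\ t = falling_time (tri_angle t) /\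
     (tri_radius t = 1 -> tri_angle t = M)) \/
  (tri_turn + /2 <= t /\ m <= tri_angle t < b /\ t = returning_time (tri_angle t) /\
     tri_radius t = 1).
Proof.
  intros Ht. pose proof tri_speed_pos. destruct tri_turn_spec as [Eturn Hturn].
  assert (Hhalf : tri_speed * /2 = M - m) by (unfold tri_speed; field).
  destruct (Rlt_dec t tri_turn) as [H1|H1]; [|destruct (Rlt_dec t (tri_turn + /2)) as [H2|H2]].
  - left. rewrite tri_angle_rising, tri_radius_outside by lra.
    repeat split; first [lra|nra|unfold rising_time; field; lra].
  - right; left. rewrite tri_angle_falling by lra.
    repeat split; try first [lra|nra|unfold falling_time; field; lra].
    intros E. destruct (Req_dec t tri_turn) as [->|Hne]; [ring|].
    destruct tri_radius_range with t as [_ Hlt]. lra.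
  - right; right. rewrite tri_angle_returning, tri_radius_outside by lra.
    assert (tri_speed * (1 - tri_turn - /2) = b - m) by (unfold tri_speed in *; lra).
    repeat split; first [lra|nra|unfold returning_time; field; lra].
Qed.

Lemma tri_angle_one : tri_angle 1 = b.
Proof.
  destruct tri_turn_spec as [Eturn Hturn].
  rewrite tri_angle_returning by lra. unfold tri_speed in *. lra.
Qed.

Lemma tri_angle_range (t : R) : 0 <= t < 1 -> m <= tri_angle t <= M.
Proof. intros Ht. destruct (tri_pieces t Ht) as [P|[P|P]]; lra. Qed.

Lemma triangle_closed : closed_curve_in_D triangle.
Proof.
  destruct tri_turn_spec as [_ Hturn].
  apply polar_closed_curve.
  - unfold tri_radius, pos_part, min_abs. reg.
  - unfold tri_angle, pos_part. reg.
  - intros t _. destruct (tri_radius_range t). lra.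
  - unfold polar. rewrite tri_angle_one, tri_angle_rising, !tri_radius_outside by lra.
    f_equal; f_equal; f_equal; ring.
Qed.

Lemma triangle_winding_number : winding_number triangle 0.
Proof.
  destruct tri_turn_spec as [_ Hturn]. apply polar_winding_number.
  - unfold tri_angle, pos_part. reg.
  - intros t _. destruct (tri_radius_range t). lra.
  - rewrite tri_angle_one, tri_angle_rising by lra. simpl. ring.
Qed.

Lemma triangle_embedded : M - m < 2 * PI -> embedded triangle.
Proof.
  intros Hwidth. apply polar_embedded.
  - intros t _. destruct (tri_radius_range t). lra.
  - intros s t Hs Ht Er Ea.
    destruct (tri_pieces s Hs) as [S|[S|S]]; destruct (tri_pieces t Ht) as [T|[T|T]];
      try (rewrite (proj1 (proj2 (proj2 S))), (proj1 (proj2 (proj2 T))), Ea; reflexivity);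
      destruct S as [? [? [_ S]]], T as [? [? [_ T]]];
      try specialize (S ltac:(lra)); try specialize (T ltac:(lra)); lra.
  - intros s t Hs Ht. pose proof (tri_angle_range s Hs). pose proof (tri_angle_range t Ht).
    apply Rabs_def1; lra.
Qed.

Definition tri_times (d : R) : list R :=
  (if Rle_dec b d then if Rlt_dec d M then rising_time d :: nil else nil else nil) ++
  (if Rlt_dec m d then if Rle_dec d M then falling_time d :: nil else nil else nil) ++
  (if Rle_dec m d then if Rlt_dec d b then returning_time d :: nil else nil else nil).

Lemma tri_times_spec (d t : R) : In t (tri_times d) <-> 0 <= t < 1 /\ tri_angle t = d.
Proof.
  unfold tri_times. rewrite !in_app_iff, !In_nested_if_singleton. split.
  - pose proof tri_speed_pos. destruct tri_turn_spec as [Eturn Hturn].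
    assert (Hhalf : tri_speed * /2 = M - m) by (unfold tri_speed; field).
    intros [[? [? ->]]|[[? [? ->]]|[? [? ->]]]].
    + destruct (rising_time_spec d ltac:(lra)) as [_ [Ha _]]. split; [|exact Ha].
      assert (tri_speed * rising_time d = d - b) by (unfold rising_time; field; lra).
      split; nra.
    + destruct (falling_time_spec d ltac:(lra)) as [_ Ha]. split; [|exact Ha].
      assert (tri_speed * (falling_time d - tri_turn) = M - d)
        by (unfold falling_time; field; lra).
      split; nra.
    + destruct (returning_time_spec d ltac:(lra)) as [? [Ha _]]. split; [lra|exact Ha].
  - intros [Ht <-]. destruct (tri_pieces t Ht) as [P|[P|P]]; [left|right; left|right; right];
      repeat split; lra.
Qed.

Lemma tri_times_nodup (d : R) : NoDup (tri_times d).
Proof.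
  pose proof tri_speed_pos. destruct tri_turn_spec as [Eturn Hturn].
  assert (Hhalf : tri_speed * /2 = M - m) by (unfold tri_speed; field).
  assert (tri_speed * rising_time d = d - b) by (unfold rising_time; field; lra).
  assert (tri_speed * (falling_time d - tri_turn) = M - d) by (unfold falling_time; field; lra).
  assert (tri_speed * (returning_time d - tri_turn - /2) = d - m)
    by (unfold returning_time; field; lra).
  unfold tri_times. repeat destruct Rle_dec; repeat destruct Rlt_dec; simpl; try lra;
    repeat (apply NoDup_cons; [simpl; intuition nra|]); apply NoDup_nil.
Qed.

Lemma tri_times_length (d : R) : m <= d <= M -> length (tri_times d) = arc_multiplicity m M d.
Proof.
  intros Hd. unfold tri_times, arc_multiplicity.
  repeat destruct Rle_dec; repeat destruct Rlt_dec; simpl; lra || reflexivity.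
Qed.

Lemma triangle_has_cost (ds : list R) : NoDup ds ->
  (forall d, In d ds <-> branch_angle d /\ m <= d <= M) ->
  has_cost triangle (list_sum (map (arc_multiplicity m M) ds)).
Proof.
  intros Hnd Hds.
  replace (list_sum (map (arc_multiplicity m M) ds)) with (length (flat_map tri_times ds)).
  2:{ rewrite length_flat_map. f_equal. apply map_ext_in. intros d Hd.
      apply tri_times_length. apply Hds in Hd. tauto. }
  apply polar_has_cost.
  - intros t _. destruct (tri_radius_range t). lra.
  - apply NoDup_flat_map_fibers with tri_angle; [exact Hnd|apply tri_times_nodup|].
    intros d t Ht. now apply tri_times_spec in Ht.
  - intros t. rewrite in_flat_map. split.
    + intros [d [Hd Ht]]. apply tri_times_spec in Ht as [Ht <-]. apply Hds in Hd. tauto.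
    + intros [Ht Hbr]. exists (tri_angle t). rewrite Hds, tri_times_spec.
      pose proof (tri_angle_range t Ht). tauto.
Qed.

Lemma triangle_at_rising_time (x : R) : b <= x <= M -> triangle (rising_time x) = circ x.
Proof.
  intros Hx. destruct (rising_time_spec x Hx) as [_ [Ha Hr]].
  unfold triangle, polar, circ. rewrite Ha, Hr. f_equal; ring.
Qed.

Lemma triangle_at_returning_time (x : R) : m <= x < b -> triangle (returning_time x) = circ x.
Proof.
  intros Hx. destruct (returning_time_spec x Hx) as [_ [Ha Hr]].
  unfold triangle, polar, circ. rewrite Ha, Hr. f_equal; ring.
Qed.

End Triangle.

(** * No gap wider than [PI] *)

Lemma sin_neq_0_of_abs_lt_PI (x : R) : 0 < Rabs x < PI -> sin x <> 0.
Proof.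
  unfold Rabs. destruct Rcase_abs; intros Hx.
  - rewrite <- (Ropp_involutive x), sin_neg.
    assert (0 < sin (- x)) by (apply sin_gt_0; lra). lra.
  - assert (0 < sin x) by (apply sin_gt_0; lra). lra.
Qed.

Lemma sin_sub_add_PI (x d : R) : sin (x - (d + PI)) = - sin (x - d).
Proof.
  replace (x - (d + PI)) with (x - d - PI) by ring. rewrite sin_minus, cos_PI, sin_PI. ring.
Qed.

Lemma two_zeros_of_sin_nonneg (b : nat -> R) (J : nat) (d : R) : (2 <= J)%nat ->
  (forall j, (j < J)%nat -> 0 < b (S j) - b j <= PI) -> b J = b O + 2 * PI ->
  (forall j, (j < J)%nat -> sin (b j - d) >= 0) ->
  exists i j, (i < J)%nat /\ (j < J)%nat /\ i <> j /\ sin (b i - d) = 0 /\ sin (b j - d) = 0.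
Proof.
  intros HJ Hstep Hlast Hnonneg. pose proof PI_RGT_0.
  destruct (floor_exists ((b O - d) / (2 * PI))) as [n Hn].
  set (a := d + 2 * PI * IZR n).
  assert (Hsin : forall x, sin (x - d) = sin (x - a)).
  { intros x. unfold a. rewrite <- (sin_add_2PI_mult (x - (d + 2 * PI * IZR n)) n). f_equal. ring. }
  assert (Hzero : forall x, x = a \/ x = a + PI \/ x = a + 2 * PI -> sin (x - d) = 0).
  { intros x Hx. rewrite Hsin. destruct Hx as [-> | [-> | ->]].
    - rewrite Rminus_diag. apply sin_0.
    - replace (a + PI - a) with PI by ring. apply sin_PI.
    - replace (a + 2 * PI - a) with (2 * PI) by ring. apply sin_2PI. }
  assert (Hb0 : a <= b O <= a + PI).
  { assert (Hq : b O - d = 2 * PI * ((b O - d) / (2 * PI))) by (field; lra).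
    assert (Hwin : a <= b O < a + 2 * PI) by (unfold a; nra).
    destruct (sin_nonneg_cases (b O - a)) as [Hle|Heq];
      [lra|rewrite <- Hsin; apply Hnonneg; lia|lra|lra]. }
  assert (Hband : forall j, (j < J)%nat -> a <= b j <= a + PI \/
            exists i, (S i < J)%nat /\ b i = a + PI /\ b (S i) = a + 2 * PI).
  { induction j as [|j IH]; intros Hj; [now left|].
    destruct IH as [[Hlo Hhi]|Hpair]; [lia| |now right].
    specialize (Hstep j ltac:(lia)).
    destruct (sin_nonneg_cases (b (S j) - a)) as [Hle|Heq];
      [lra|rewrite <- Hsin; now apply Hnonneg|left; lra|].
    right. exists j. split; [exact Hj|]. lra. }
  destruct (Hband (J - 1)%nat ltac:(lia)) as [[Hlo Hhi]|[i [Hi [Ei ESi]]]].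
  - specialize (Hstep (J - 1)%nat ltac:(lia)). replace (S (J - 1)) with J in Hstep by lia.
    exists O, (J - 1)%nat. split; [lia|split; [lia|split; [lia|split]]];
      apply Hzero; [left|right; left]; lra.
  - exists i, (S i). split; [lia|split; [lia|split; [lia|split]]];
      apply Hzero; [right; left|right; right]; lra.
Qed.

Lemma side_at_docking_point (J : nat) (alpha : nat -> R) (p : pt) (j : nat) (d : R) :
  (j < J)%nat -> p = circ (alpha j) -> side d p = sin (lifted_angle J alpha j - d).
Proof. intros Hj ->. now rewrite <- (circ_lifted_angle J alpha j Hj), side_circ. Qed.

Lemma visit_times_injective (J : nat) (tt : nat -> R) :
  (forall i j, (i < j < J)%nat -> tt i < tt j) ->
  forall i j, (i < J)%nat -> (j < J)%nat -> i <> j -> tt i <> tt j.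
Proof.
  intros Hinc i j Hi Hj Hij E.
  destruct (Nat.lt_gt_cases i j) as [[Hlt|Hlt] _]; [exact Hij|..];
    [specialize (Hinc i j ltac:(lia))|specialize (Hinc j i ltac:(lia))]; lra.
Qed.

Lemma has_crossings_2_of_short_gaps (J : nat) (alpha : nat -> R) (g : R -> pt) (d : R) :
  (2 <= J)%nat -> sum_f_R0 (gap_angle J alpha) (J - 1) = 2 * PI ->
  (forall j, (j < J)%nat -> gap_angle J alpha j <= PI) ->
  cycle_rel J alpha g -> has_crossings g d 2.
Proof.
  intros HJ Hsum Hshort [Hg [tt [Htt Hinc]]].
  set (theta := lifted_angle J alpha).
  assert (Hside : forall j e, (j < J)%nat -> side e (g (tt j)) = sin (theta j - e))
    by (intros j e Hj; apply side_at_docking_point, Htt; exact Hj).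
  assert (Hzeros : forall e, (forall j, (j < J)%nat -> sin (theta j - e) >= 0) ->
            (forall x, sin (x - e) = 0 -> sin (x - d) = 0) -> has_crossings g d 2).
  { intros e Hnn Hzero.
    destruct (two_zeros_of_sin_nonneg theta J e HJ) as [i [j [Hi [Hj [Hij [Zi Zj]]]]]];
      [| |exact Hnn|].
    - intros j Hj. replace (theta (S j) - theta j) with (gap_angle J alpha j)
        by (unfold theta; simpl; ring).
      pose proof (gap_angle_range J alpha j). specialize (Hshort j Hj). lra.
    - unfold theta. now rewrite (lifted_angle_last J alpha ltac:(lia) Hsum).
    - apply (has_crossings_2 g d (tt i) (tt j)); try apply Htt; auto.
      + now apply (visit_times_injective J).
      + rewrite Hside; auto.
      + rewrite Hside; auto. }
  destruct (classic (exists i j, (i < J)%nat /\ (j < J)%nat /\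
              sin (theta i - d) * sin (theta j - d) < 0)) as [[i [j [Hi [Hj Hneg]]]]|Hsame].
  - apply (has_crossings_2_of_sign_change g d (tt i) (tt j) Hg); try apply Htt; auto.
    now rewrite !Hside.
  - destruct (classic (exists i, (i < J)%nat /\ sin (theta i - d) > 0))
      as [[i [Hi Hpos]]|Hnopos].
    + apply (Hzeros d); [|auto]. intros j Hj. apply Rnot_lt_ge. intros Hneg.
      apply Hsame. exists i, j. repeat split; auto. nra.
    + apply (Hzeros (d + PI)).
      * intros j Hj. rewrite sin_sub_add_PI. apply Rnot_lt_ge. intros Hpos.
        apply Hnopos. exists j. split; [exact Hj|lra].
      * intros x. rewrite sin_sub_add_PI. lra.
Qed.

Lemma cost_ge_6_of_short_gaps (J : nat) (alpha : nat -> R) (g : R -> pt) (n : nat) :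
  (2 <= J)%nat -> sum_f_R0 (gap_angle J alpha) (J - 1) = 2 * PI ->
  (forall j, (j < J)%nat -> gap_angle J alpha j <= PI) ->
  cycle_rel J alpha g -> has_cost g n -> (6 <= n)%nat.
Proof.
  intros HJ Hsum Hshort Hcyc Hcost. pose proof PI_RGT_0.
  change 6%nat with (list_sum (map (fun _ : R => 2%nat) (0 :: PI / 3 :: 2 * PI / 3 :: nil))).
  apply (cost_ge_crossings g n); [apply Hcyc|exact Hcost| | | |].
  - repeat constructor; simpl; intuition lra.
  - intros d Hd. simpl in Hd.
    destruct Hd as [<- | [<- | [<- | []]]]; [exists 0%Z|exists 1%Z|exists 2%Z]; simpl; field.
  - intros d e Hd He Hde. apply sin_neq_0_of_abs_lt_PI. simpl in Hd, He.
    destruct Hd as [<- | [<- | [<- | []]]], He as [<- | [<- | [<- | []]]];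
      try (exfalso; now apply Hde); unfold Rabs; destruct Rcase_abs; lra.
  - intros d _. now apply (has_crossings_2_of_short_gaps J alpha).
Qed.

Lemma short_gaps_circle_minimizer (J : nat) (alpha : nat -> R) : (1 <= J)%nat ->
  sum_f_R0 (gap_angle J alpha) (J - 1) = 2 * PI ->
  (forall j, (j < J)%nat -> gap_angle J alpha j <= PI) ->
  Wd_minimizing J alpha (circle_from (alpha O)).
Proof.
  intros HJ Hsum Hshort.
  assert (HJ2 : (2 <= J)%nat).
  { destruct (Nat.eq_dec J 1) as [->|]; [|lia]. simpl in Hsum.
    specialize (Hshort O ltac:(lia)). pose proof PI_RGT_0. lra. }
  split; [now apply circle_from_cycle_rel|].
  exists 6%nat. split; [apply circle_from_has_cost|].
  intros g n Hcyc Hcost. now apply (cost_ge_6_of_short_gaps J alpha g n).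
Qed.

(** * A gap wider than [PI] *)

Section WideGap.

Variables (J : nat) (alpha : nat -> R) (j0 : nat).
Hypothesis HJ : (1 <= J)%nat.
Hypothesis Hsum : sum_f_R0 (gap_angle J alpha) (J - 1) = 2 * PI.
Hypothesis Hj0 : (j0 < J)%nat.
Hypothesis Hwide : gap_angle J alpha j0 > PI.

Local Notation theta := (lifted_angle J alpha).
(* The docking points lie on the arc [lo, hi] complementary to the wide gap. *)
Local Notation lo := (theta (S j0) - 2 * PI).
Local Notation hi := (theta j0).

Lemma wide_gap_arc : lo <= alpha O <= hi /\ hi - lo < PI /\
  lo = hi + gap_angle J alpha j0 - 2 * PI.
Proof.
  assert (Hlo : lo = hi + gap_angle J alpha j0 - 2 * PI) by (simpl; ring).
  pose proof (lifted_angle_le J alpha (S j0) J Hj0). rewrite lifted_angle_last in * by assumption.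
  pose proof (lifted_angle_le J alpha O j0 ltac:(lia)). simpl in *. lra.
Qed.

Lemma circ_wide_gap_end : circ (alpha (S j0 mod J)) = circ lo.
Proof.
  rewrite <- (circ_lifted_angle_succ J alpha HJ Hsum j0 Hj0).
  rewrite <- (circ_add_2PI_mult lo 1). f_equal. simpl. ring.
Qed.

Lemma wide_gap_cost_lower_bound (ds : list R) (g : R -> pt) (n : nat) : NoDup ds ->
  (forall d, In d ds <-> branch_angle d /\ lo <= d <= hi) ->
  cycle_rel J alpha g -> has_cost g n ->
  (list_sum (map (arc_multiplicity lo hi) ds) <= n)%nat.
Proof.
  intros Hnd Hds [Hg [tt [Htt Hinc]]] Hcost. destruct wide_gap_arc as [_ [Hshort _]].
  set (k := (S j0 mod J)%nat). assert (Hk : (k < J)%nat) by (apply Nat.mod_upper_bound; lia).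
  destruct (Htt j0 Hj0) as [Ht0 Hq0]. destruct (Htt k Hk) as [Htk Hqk].
  assert (Shi : forall d, side d (g (tt j0)) = sin (hi - d))
    by (intros d; now apply side_at_docking_point).
  assert (Slo : forall d, side d (g (tt k)) = sin (lo - d))
    by (intros d; rewrite Hqk; unfold k; now rewrite circ_wide_gap_end, side_circ).
  apply (cost_ge_crossings g n); auto.
  - intros d Hd. now apply Hds in Hd.
  - intros d e Hd He Hde. apply Hds in Hd, He. apply sin_neq_0_of_abs_lt_PI.
    unfold Rabs. destruct Rcase_abs; lra.
  - intros d Hd. apply Hds in Hd as [_ Hd]. unfold arc_multiplicity.
    destruct (Rlt_dec lo d); [destruct (Rlt_dec d hi)|].
    + apply (has_crossings_2_of_sign_change g d (tt j0) (tt k) Hg Ht0 Htk).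
      rewrite Shi, Slo.
      assert (0 < sin (hi - d)) by (apply sin_gt_0; lra).
      assert (sin (lo - d) < 0) by (apply sin_lt_0_var; lra). nra.
    + apply (has_crossings_1 g d (tt j0) Ht0). rewrite Shi.
      replace (hi - d) with 0 by lra. apply sin_0.
    + apply (has_crossings_1 g d (tt k) Htk). rewrite Slo.
      replace (lo - d) with 0 by lra. apply sin_0.
Qed.

(* The apex is [hi], except for a single docking point: then the arc degenerates and is
   widened without meeting new branch angles. *)
Lemma wide_gap_apex : distinct_points J alpha ->
  exists M, hi <= M /\ lo < M /\ M - lo < 2 * PI /\
    forall d, branch_angle d -> lo <= d <= M ->
      d <= hi /\ arc_multiplicity lo M d = arc_multiplicity lo hi d.
Proof.
  intros Hdist. destruct wide_gap_arc as [Harc [Hshort Hlo]]. pose proof PI_RGT_0.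
  destruct (Nat.eq_dec J 1) as [EJ|NJ].
  - assert (Hdeg : hi = lo).
    { replace j0 with O in * by lia. subst J. simpl in Hsum |- *. lra. }
    destruct (branch_angle_free_right lo) as [e [He Hfree]].
    exists (lo + e). split; [lra|split; [lra|split; [lra|]]].
    intros d Hbr Hd. rewrite (Hfree d Hbr Hd), Hdeg. unfold arc_multiplicity.
    destruct Rlt_dec; [lra|]. split; [lra|reflexivity].
  - pose proof (gap_angle_lt_2PI J alpha j0 ltac:(lia) Hdist Hj0).
    exists hi. split; [lra|split; [lra|split; [lra|]]]. intros d _ Hd. split; [lra|reflexivity].
Qed.

Lemma triangle_cycle_rel (M : R) : hi <= M -> lo < M ->
  cycle_rel J alpha (triangle lo (alpha O) M).
Proof.
  intros HhiM HloM. destruct wide_gap_arc as [[Hlo Hhi] _].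
  assert (Hrise : forall j, (j <= j0)%nat -> alpha O <= theta j <= M).
  { intros j Hj. pose proof (lifted_angle_le J alpha j j0 Hj).
    pose proof (lifted_angle_window J alpha HJ Hsum j ltac:(lia)). lra. }
  assert (Hret : forall j, (j0 < j < J)%nat -> lo <= theta j - 2 * PI < alpha O).
  { intros j Hj. pose proof (lifted_angle_le J alpha (S j0) j ltac:(lia)).
    pose proof (lifted_angle_window J alpha HJ Hsum j ltac:(lia)). lra. }
  destruct (tri_turn_spec lo (alpha O) M Hlo ltac:(lra) HloM) as [_ Hturn].
  split; [apply triangle_closed; lra|].
  exists (fun j => if le_dec j j0 then rising_time lo (alpha O) M (theta j)
                   else returning_time lo (alpha O) M (theta j - 2 * PI)).
  split.
  - intros j Hj. rewrite <- (circ_lifted_angle J alpha j Hj). destruct le_dec as [Hle|Hgt].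
    + destruct (rising_time_spec lo (alpha O) M Hlo ltac:(lra) HloM (theta j) (Hrise j Hle))
        as [Ht _].
      split; [lra|]. apply triangle_at_rising_time; auto; lra.
    + specialize (Hret j ltac:(lia)).
      destruct (returning_time_spec lo (alpha O) M Hlo ltac:(lra) HloM _ Hret) as [Ht _].
      split; [lra|]. rewrite triangle_at_returning_time by (auto; lra).
      rewrite <- (circ_add_2PI_mult (theta j - 2 * PI) 1). f_equal. simpl. ring.
  - intros i j Hij. pose proof (lifted_angle_lt J alpha i j ltac:(lia)).
    destruct (le_dec i j0) as [Hi|Hi], (le_dec j j0) as [Hj|Hj]; try lia.
    + apply rising_time_increasing; lra.
    + destruct (rising_time_spec lo (alpha O) M Hlo ltac:(lra) HloM (theta i) (Hrise i Hi)).
      destruct (returning_time_spec lo (alpha O) M Hlo ltac:(lra) HloM (theta j - 2 * PI)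
        (Hret j ltac:(lia))). lra.
    + apply returning_time_increasing; lra.
Qed.

Lemma wide_gap_triangle_minimizer : distinct_points J alpha ->
  exists g, Wd_minimizing J alpha g /\ embedded g /\
    monotone_cycle_rel J alpha g /\ winding_number g 0.
Proof.
  intros Hdist. destruct wide_gap_arc as [[Hlo Hhi] _].
  destruct (wide_gap_apex Hdist) as [M [HhiM [HloM [Hwidth Happex]]]].
  destruct (branch_angles_between lo M) as [ds [Hnd Hds]].
  assert (Hcyc := triangle_cycle_rel M HhiM HloM).
  exists (triangle lo (alpha O) M). split; [|split; [|split]].
  - split; [exact Hcyc|]. exists (list_sum (map (arc_multiplicity lo M) ds)).
    split; [apply triangle_has_cost; auto; lra|].
    intros g n Hcyc' Hcost. erewrite map_ext_in.
    + apply (wide_gap_cost_lower_bound ds g n Hnd); auto.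
      intros d. rewrite Hds. split; intros [Hbr Hd]; split; auto.
      * split; [lra|now apply Happex].
      * lra.
    + intros d Hd. apply Hds in Hd as [Hbr Hd]. now apply Happex.
  - apply triangle_embedded; lra.
  - split; [exact Hcyc|]. now apply ccw_cyclic_order_of_gap_sum.
  - apply triangle_winding_number; lra.
Qed.

End WideGap.

Theorem mainTheorem8 (J : nat) (alpha : nat -> R)
  (HJ : (1 <= J)%nat)
  (Hdist : distinct_points J alpha)
  (Hsum : sum_f_R0 (gap_angle J alpha) (J - 1) = 2 * PI) :
  ((exists j, (j < J)%nat /\ gap_angle J alpha j > PI) ->
     exists g, Wd_minimizing J alpha g /\ embedded g /\
               monotone_cycle_rel J alpha g /\ winding_number g 0%Z) /\
  ((forall j, (j < J)%nat -> gap_angle J alpha j <= PI) ->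
     exists g, Wd_minimizing J alpha g /\ embedded g /\
               (winding_number g 1%Z \/ winding_number g (-1)%Z)).
Proof.
  split.
  - intros [j0 [Hj0 Hwide]].
    exact (wide_gap_triangle_minimizer J alpha j0 HJ Hsum Hj0 Hwide Hdist).
  - intros Hshort. exists (circle_from (alpha O)).
    split; [now apply short_gaps_circle_minimizer|].
    split; [apply circle_from_embedded|left; apply circle_from_winding_number].
Qed.
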